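(* Fix a sequence $q_1,q_2,\dots$ of probability measures on $\mathbb{N}_0$ (a varying environment), $n\ge1$ and $z\ge1$, with notation as in the context. Then $$\mathbb{P}\big(\hat Z^{(0)}_n+\dots+\hat Z^{(n-1)}_n=0\big)=\prod_{k=0}^{n-1}\mathbb{P}\big(\hat Z^{(k)}_n=0\big)=\frac{\mathsf p_{n-1,n}}{\mathsf p_{-1,n}}\prod_{k=0}^{n-1}f_k'\big(f_{k,n}(0)\big),$$ with the convention $f_0(s):=s^z$.
   Context: Let $f_k$ be the p.g.f. of $q_k$, $f_{k,n}=f_{k+1}\circ\dots\circ f_n$, $f_{n,n}$ the identity. $(Z_j)$ is the branching process in varying environment: given $Z_{j-1}$, $Z_j$ is a sum of $Z_{j-1}$ i.i.d. variables of law $q_j$. Put $\mathsf p_{k,n}=1-f_{k,n}(0)$ for $0\le k<n$, $\mathsf p_{n,n}=1$, and $\mathsf p_{-1,n}=1-f_{0,n}(0)^z$ (the probability that $Z_n>0$ when $Z_0=z$); assume $\mathsf p_{k,n}>0$ for $-1\le k\le n$. Let $\hat Y_0,\dots,\hat Y_n$ be independent with $\mathbb{P}(\hat Y_0=i)=\frac{1-f_{0,n}(0)}{\mathsf p_{-1,n}}f_{0,n}(0)^{z-i-1}$ for $0\le i\le z-1$, and for $1\le k\le n$, $i\ge0$, $\mathbb{P}(\hat Y_k=i)=\frac{\mathsf p_{k,n}}{\mathsf p_{k-1,n}}\sum_{j\ge i+1}q_k(j)f_{k,n}(0)^{j-i-1}$. For $0\le k\le n$, let $(\hat Z^{(k)}_j)_{j\ge0}$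 be independent processes with $\hat Z^{(k)}_j=0$ for $j<k$, $\hat Z^{(k)}_k=\hat Y_k$, and for $j>k$, given $\hat Z^{(k)}_{j-1}$, $\hat Z^{(k)}_j$ is a sum of $\hat Z^{(k)}_{j-1}$ i.i.d. variables of law $q_j$. *)

From HB Require Import structures.
From mathcomp Require Import all_boot all_order all_algebra.
From mathcomp Require Import all_classical all_reals all_analysis.
Set Implicit Arguments. Unset Strict Implicit. Unset Printing Implicit Defensive.
Import Order.TTheory GRing.Theory Num.Theory.
Import numFieldNormedType.Exports.
Local Open Scope ring_scope.
Local Open Scope classical_set_scope.

Section BPVE.
Variable R : realType.

Definition is_prob_nat (q : nat -> R) : Prop :=
  (forall j, 0 <= q j) /\ (series q @ \oo --> (1 : R)).

Definition pgf (q : nat -> R) (s : R) : R :=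
  limn (series (fun j => q j * s ^+ j)).

Fixpoint fcomp (q : nat -> nat -> R) (k m : nat) (s : R) : R :=
  match m with
  | 0 => s
  | m'.+1 => pgf (q k.+1) (fcomp q k.+1 m' s)
  end.

(* f_{k,n} = f_{k+1} o ... o f_n, f_{n,n} = id *)
Definition fkn (q : nat -> nat -> R) (k n : nat) (s : R) : R := fcomp q k (n - k) s.

Definition pkn (q : nat -> nat -> R) (k n : nat) : R := 1 - fkn q k n 0.

Definition pm1n (q : nat -> nat -> R) (z n : nat) : R := 1 - (fkn q 0 n 0) ^+ z.

Definition fconv (q : nat -> nat -> R) (z k : nat) : R -> R :=
  if k == 0%N then (fun s => s ^+ z) else pgf (q k).

Definition yhat_law (q : nat -> nat -> R) (z n k i : nat) : R :=
  if k == 0%N then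
    (if (i < z)%N then
       (1 - fkn q 0 n 0) / pm1n q z n * (fkn q 0 n 0) ^+ (z - i - 1)
     else 0)
  else
    pkn q k n / pkn q k.-1 n *
      limn (series (fun j => if (i < j)%N then q k j * (fkn q k n 0) ^+ (j - i - 1)
                             else 0)).

Section Prob.
Context {d : measure_display} {T : measurableType d}.

Definition Pr (P : probability T R) (A : set T) : R := fine (P A).

Definition mutually_indep (P : probability T R) (I : eqType) (good : pred I)
    (X : I -> T -> nat) : Prop :=
  forall (s : seq I) (v : I -> nat), uniq s -> all good s ->
    Pr P (\bigcap_(i in [set` s]) [set w | X i w = v i]) =
    \prod_(i <- s) Pr P [set w | X i w = v i].

(* the processes \hat Z^{(k)} built from \hat Y_k and offspring variables
   xi k j i (the i-th individual of generation j-1 of process k) *)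
Fixpoint Zhat (Y : nat -> T -> nat) (xi : nat -> nat -> nat -> T -> nat)
    (k j : nat) (w : T) : nat :=
  match j with
  | 0 => if k == 0%N then Y 0%N w else 0%N
  | j'.+1 =>
      if (j'.+1 < k)%N then 0%N
      else if k == j'.+1 then Y k w
      else (\sum_(i < Zhat Y xi k j' w) xi k j'.+1 i w)%N
  end.

End Prob.

(* index set: inl k  ~ \hat Y_k ;  inr (k, j, i) ~ xi k j i *)
Definition bp_index := (nat + nat * nat * nat)%type.

Definition bp_family {T : Type} (Y : nat -> T -> nat)
    (xi : nat -> nat -> nat -> T -> nat) : bp_index -> T -> nat :=
  fun a => match a with inl k => Y k | inr (k, j, i) => xi k j i end.

Definition bp_good (n : nat) : pred bp_index :=
  fun a => match a with inl k => (k <= n)%N | inr (k, j, i) => (k <= n)%N && (k < j)%N end.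

End BPVE.

From HB Require Import structures.
From mathcomp Require Import all_boot all_order all_algebra.
From mathcomp Require Import all_classical all_reals all_analysis.
From mathcomp Require Import ring lra zify.
Import Order.TTheory GRing.Theory Num.Theory.
Import numFieldNormedType.Exports.
Local Open Scope ring_scope.
Local Open Scope classical_set_scope.

(* Process [k] dies out by time [n] iff each of its [Yhat_k] founders does; given
   [Yhat_k = i] this has probability [f_{k,n}(0)^i], because distinct founders have
   independent offspring variables.  Hence [P(Zhat^(k)_n = 0)] is the generating
   function of [Yhat_k] at [f_{k,n}(0)].  For [k >= 1], exchanging the double sum
   [sum_i sum_{j>i} q_k(j) s^(j-1)] into [sum_j j q_k(j) s^(j-1)] identifies it with
   [p_{k,n} / p_{k-1,n} * f_k'(f_{k,n}(0))]; for [k = 0] it is a finite sum.  The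
   processes are built from disjoint families of independent variables, so their
   extinction events are independent, and the ratios of the [p_{k,n}] telescope. *)

Section RealSeries.
Context {R : realType}.
Implicit Types (u : R ^nat) (c l s : R).

(* No convergence of [series u] is assumed: for [c = 0] both sides are [0]. *)
Lemma cvg_seriesMl_lim c l u :
  series (fun i => c * u i) @ \oo --> l -> l = c * limn (series u).
Proof.
have -> : series (fun i => c * u i) = (fun N => c * series u N).
  by apply/funext => N; rewrite /series /= mulr_sumr.
have [-> h|c0 h] := eqVneq c 0.
  rewrite mul0r -(cvg_lim _ h) // (_ : (fun N => _) = cst 0) ?lim_cst //.
  by apply/funext => N; rewrite mul0r.
have hu : series u @ \oo --> c^-1 * l.
  rewrite (_ : series u = (fun N => c^-1 * (c * series u N))); first exact: cvgMl_tmp.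
  by apply/funext => N; rewrite mulrA mulVf ?mul1r.
by rewrite (cvg_lim _ hu) // mulrA divff ?mul1r.
Qed.

Lemma natr_exprn_le_inv s i : 0 <= s < 1 -> i.+1%:R * s ^+ i <= (1 - s)^-1.
Proof.
move=> /andP [s0 s1]; have s1' : 0 < 1 - s by rewrite subr_gt0.
rewrite -div1r ler_pdivlMr //.
have le_sum : i.+1%:R * s ^+ i <= \sum_(j < i.+1) s ^+ j.
  rewrite mulr_natl -[X in _ *+ X](card_ord i.+1) -sumr_const.
  by apply: ler_sum => j _; rewrite ler_wiXn2l // ?ltW // -ltnS.
have sum_eq : (\sum_(j < i.+1) s ^+ j) * (1 - s) = 1 - s ^+ i.+1.
  by rewrite mulrC -opprB mulNr -subrX1 opprB.
apply: le_trans (ler_wpM2r (ltW s1') le_sum) _.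
by rewrite sum_eq gerDl oppr_le0 exprn_ge0.
Qed.

Lemma cvgn_pseries_quadratic (c : R ^nat) K :
  0 <= K < 1 -> (forall i, `|c i| <= (i.+1 * i.+2)%:R) -> cvgn (pseries c K).
Proof.
move=> /andP [K0 K1] hc.
pose th := Num.sqrt K; pose s := Num.sqrt th.
have th0 : 0 <= th := sqrtr_ge0 K; have s0 : 0 <= s := sqrtr_ge0 th.
have th1 : th < 1 by rewrite -sqrtr1 ltr_sqrt.
have s1 : s < 1 by rewrite -sqrtr1 ltr_sqrt.
have eK i : K ^+ i = (s ^+ i) ^+ 2 * th ^+ i.
  by rewrite -exprM mulnC exprM sqr_sqrtr // -exprD addnn -mul2n exprM sqr_sqrtr.
pose C := 2 * ((1 - s)^-1) ^+ 2.
apply: normed_cvg; apply: (series_le_cvg (v_ := geometric C th)) => [i|i|i|].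
- exact: normr_ge0.
- by rewrite /= mulr_ge0 ?exprn_ge0 // /C mulr_ge0 ?sqr_ge0.
- have hsi : 0 <= i.+1%:R * s ^+ i by rewrite mulr_ge0 ?exprn_ge0.
  rewrite /= normrM normrX (ger0_norm K0) eK mulrA ler_wpM2r ?exprn_ge0 //.
  apply: le_trans (ler_wpM2r _ (hc i)) _; first by rewrite exprn_ge0 ?exprn_ge0.
  have h2 : (i.+1 * i.+2)%:R <= 2 * i.+1%:R ^+ 2 :> R.
    by rewrite -natrX -natrM ler_nat; nia.
  apply: le_trans (ler_wpM2r _ h2) _; first by rewrite exprn_ge0 ?exprn_ge0.
  rewrite -mulrA -exprMn ler_wpM2l // lerXn2r ?nnegrE ?natr_exprn_le_inv ?s0 //.
  by rewrite invr_ge0 subr_ge0 ltW.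
- by apply: is_cvg_geometric_series; rewrite ger0_norm.
Qed.

Lemma cvg_series_tails (b : R ^nat) : (forall j, 0 <= b j) ->
  cvgn (series (fun j => j%:R * b j)) ->
  series (fun i => limn (series (fun j => if (i < j)%N then b j else 0)))
    @ \oo --> limn (series (fun j => j%:R * b j)).
Proof.
move=> b0 ca; set a := fun j => j%:R * b j; set tail := fun i => limn _.
have a0 j : 0 <= a j by rewrite mulr_ge0.
have cvg_tail i : series (fun j => if (i < j)%N then b j else 0) @ \oo --> tail i.
  apply: (series_le_cvg (v_ := a)) => // j; first by case: ifP.
  case: ifP => // ij; rewrite -[leLHS]mul1r ler_wpM2r // ler1n.
  exact: leq_ltn_trans ij.
pose m N j := (minn j N)%:R * b j.
have m0 N j : 0 <= m N j by rewrite mulr_ge0.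
(* [m N] truncates each column [j] of the triangle [i < j] at height [N]. *)
have cvg_m N : series (m N) @ \oo --> series tail N.
  elim: N => [|N IH].
    rewrite /series /= big_geq //; apply: cvg_near_cst; near=> K.
    by rewrite /series /= big1 // => j _; rewrite /m minn0 mul0r.
  rewrite /series /= big_nat_recr //=.
  apply: cvg_trans (cvgD IH (cvg_tail N)); apply: near_eq_cvg; near=> K.
  rewrite [LHS]/GRing.add /= /series /= -big_split /=; apply: eq_bigr => j _.
  rewrite /m (_ : minn j N.+1 = minn j N + (N < j))%N; last by case: leqP; lia.
  by rewrite natrD mulrDl; case: ltnP => _; rewrite ?mul1r ?mul0r ?addr0.
have cvgn_m N : cvgn (series (m N)) := cvgP _ (cvg_m N).
apply: (squeeze_cvgr (f := series a) (h := fun=> limn (series a))); last exact: cvg_cst.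
  near=> N; apply/andP; split.
    rewrite -(cvg_lim _ (cvg_m N)) //.
    have nd : nondecreasing_seq (series (m N)) by exact: nondecreasing_series.
    rewrite (_ : series a N = series (m N) N); first exact: nondecreasing_cvgn_le.
    by apply: eq_big_nat => j /andP [_ jN]; rewrite /m (minn_idPl (ltnW jN)).
  rewrite -(cvg_lim _ (cvg_m N)) //; apply: lim_series_le => // j.
  by rewrite /m ler_wpM2r // ler_nat geq_minl.
exact: ca.
Unshelve. all: by end_near.
Qed.

End RealSeries.

Section ProbabilityGeneratingFunction.
Context {R : realType}.
Implicit Types (q : R ^nat) (x : R).

Lemma prob_nat_le1 q i : is_prob_nat q -> q i <= 1.
Proof.
move=> [q0 cq]; have nd : nondecreasing_seq (series q) by exact: nondecreasing_series.
have := nondecreasing_cvgn_le nd (cvgP _ cq) i.+1; rewrite (cvg_lim _ cq) //.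
by apply: le_trans; rewrite /series /= big_nat_recr //= lerDr sumr_ge0.
Qed.

Lemma is_cvg_series_pgf q x : is_prob_nat q -> 0 <= x <= 1 ->
  cvgn (series (fun j => q j * x ^+ j)).
Proof.
move=> [q0 cq] /andP [x0 x1]; apply: (series_le_cvg (v_ := q)) => // [j|j|].
- by rewrite mulr_ge0 ?exprn_ge0.
- by rewrite ler_piMr ?exprn_ile1.
- exact: cvgP cq.
Qed.

Lemma pgf_ge0_le1 q x : is_prob_nat q -> 0 <= x <= 1 -> 0 <= pgf q x <= 1.
Proof.
move=> hq hx; have [q0 cq] := hq; have /andP [x0 x1] := hx.
have cx := is_cvg_series_pgf _ _ hq hx.
apply/andP; split.
  by apply: limr_ge => //; near=> N; apply: sumr_ge0 => j _; rewrite mulr_ge0 ?exprn_ge0.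
rewrite -(cvg_lim _ cq) //; apply: lim_series_le => // [|j]; first exact: cvgP cq.
by rewrite ler_piMr ?exprn_ile1.
Unshelve. all: by end_near.
Qed.

Lemma pgf_derive1 q x : is_prob_nat q -> 0 <= x < 1 ->
  series (fun j => j%:R * q j * x ^+ j.-1) @ \oo --> derive1 (pgf q) x.
Proof.
move=> hq /andP [x0 x1]; have [q0 _] := hq.
have q1 i : `|q i| <= 1 by rewrite ger0_norm // prob_nat_le1.
have n1 i : 1 <= (i.+1 * i.+2)%:R :> R by rewrite ler1n muln_gt0.
have b0 i : `|q i| <= (i.+1 * i.+2)%:R := le_trans (q1 i) (n1 i).
have b1 i : `|pseries_diffs q i| <= (i.+1 * i.+2)%:R.
  rewrite /pseries_diffs normrM ger0_norm // natrM ler_pM2l ?ltr0Sn //.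
  by apply: le_trans (q1 _) _; rewrite ler1n.
have b2 i : `|pseries_diffs (pseries_diffs q) i| <= (i.+1 * i.+2)%:R.
  rewrite /pseries_diffs normrM ger0_norm // natrM ler_pM2l ?ltr0Sn //.
  by rewrite normrM ger0_norm // -[leRHS]mulr1 ler_pM2l ?ltr0Sn.
pose K := (1 + x) / 2.
have K01 : 0 <= K < 1 by apply/andP; split; rewrite /K; lra.
have xK : `|x| < `|K| by rewrite !ger0_norm /K; lra.
have D := pseries_snd_diffs (cvgn_pseries_quadratic _ _ K01 b0)
  (cvgn_pseries_quadratic _ _ K01 b1) (cvgn_pseries_quadratic _ _ K01 b2) xK.
rewrite derive1E (@derive_val _ _ _ _ _ _ _ D).
by apply: pseries_diffs_equiv; apply: (cvgn_pseries_quadratic _ _ _ b1); rewrite x0.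
Qed.

Lemma limn_series_tail_pgf q x i : is_prob_nat q -> 0 <= x <= 1 ->
  limn (series (fun j => if (i < j)%N then q j * x ^+ (j - i - 1) else 0)) * x ^+ i
  = limn (series (fun j => if (i < j)%N then q j * x ^+ j.-1 else 0)).
Proof.
move=> [q0 cq] /andP [x0 x1].
have c : cvgn (series (fun j => if (i < j)%N then q j * x ^+ (j - i - 1) else 0)).
  apply: (series_le_cvg (v_ := q)) => // [j|j|]; last exact: cvgP cq.
    by case: ifP => _ //; rewrite mulr_ge0 ?exprn_ge0.
  by case: ifP => _ //; rewrite ler_piMr ?exprn_ile1.
apply/esym/cvg_lim => //; apply: cvg_trans _ (cvgMr_tmp (b := x ^+ i) c).
apply: near_eq_cvg; near=> N; rewrite /series /= mulr_suml; apply: eq_bigr => j _.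
case: ifP => ij; last by rewrite mul0r.
by rewrite -mulrA -exprD; congr (_ * _ ^+ _); lia.
Unshelve. all: by end_near.
Qed.

Lemma fkn_pred (q : nat -> nat -> R) j n s : (j < n)%N ->
  fkn q j n s = pgf (q j.+1) (fkn q j.+1 n s).
Proof. by move=> jn; rewrite /fkn -(subnSK jn). Qed.

Lemma fknn (q : nat -> nat -> R) n s : fkn q n n s = s.
Proof. by rewrite /fkn subnn. Qed.

Lemma fkn_ge0_le1 (q : nat -> nat -> R) j n s :
  (forall k, (j < k)%N -> is_prob_nat (q k)) -> 0 <= s <= 1 -> 0 <= fkn q j n s <= 1.
Proof.
rewrite /fkn; move: (n - j)%N => m; elim: m j => [|m IH] j hq hs //=.
apply: pgf_ge0_le1; first exact: hq.
by apply: IH => // k jk; apply: hq; exact: ltn_trans jk.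
Qed.

End ProbabilityGeneratingFunction.

Lemma prod_ratio_telescope {K : fieldType} (a : nat -> K) (b : K) m :
  (0 < m)%N -> (forall k, (k < m.-1)%N -> a k != 0) ->
  \prod_(k < m) (if (k : nat) == 0%N then a 0%N / b else a k / a k.-1) = a m.-1 / b.
Proof.
case: m => // m _; elim: m => [|m IH] /= a_neq0; first by rewrite big_ord1.
rewrite big_ord_recr /= IH => [|k km]; last exact/a_neq0/ltnW.
by rewrite mulrC mulrA divfK // a_neq0.
Qed.

Section RealProbability.
Context {R : realType} {d : measure_display} {T : measurableType d} (P : probability T R).

Lemma Pr_setT : Pr P setT = 1.
Proof. by rewrite /Pr probability_setT. Qed.

Lemma Pr_set0 : Pr P set0 = 0.
Proof. by rewrite /Pr measure0. Qed.

Lemma cvg_series_Pr_bigcup (F : nat -> set T) :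
  (forall i, measurable (F i)) -> trivIset setT F ->
  series (fun i => Pr P (F i)) @ \oo --> Pr P (\bigcup_i F i).
Proof.
move=> mF tF; have := @measure_sigma_additive _ _ _ P _ mF tF.
have mU : measurable (\bigcup_i F i) by exact: bigcupT_measurable.
rewrite -[X in _ --> X]fineK ?fin_num_measure // => /fine_cvg.
apply: cvg_trans; apply: near_eq_cvg; near=> N.
by rewrite /series /= -sum_fine // => i _; exact: fin_num_measure.
Unshelve. all: by end_near.
Qed.

End RealProbability.

Section BranchingProcess.
Context {R : realType} {d : measure_display} {T : measurableType d} {P : probability T R}.
Context {q : nat -> nat -> R} {n : nat} {Y : nat -> T -> nat} {xi : nat -> nat -> nat -> T -> nat}.
Hypothesis measurable_X :
  forall b v, bp_good n b -> measurable [set w | bp_family Y xi b w = v].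
Hypothesis indep_X : mutually_indep P (bp_good n) (bp_family Y xi).
Local Notation X := (bp_family Y xi).

Definition cylinder (s : seq bp_index) (v : bp_index -> nat) : set T :=
  \bigcap_(b in [set` s]) [set w | X b w = v b].

Lemma cylinder_nil v : cylinder [::] v = setT.
Proof. by apply/seteqP; split => w // _ b. Qed.

Lemma cylinder_cons b s v :
  cylinder (b :: s) v = [set w | X b w = v b] `&` cylinder s v.
Proof.
apply/seteqP; split => [w Hw | w [Hb Hs] c].
  by split => [|c cs]; apply: Hw; rewrite /= inE ?eqxx ?cs ?orbT.
by rewrite /= inE => /orP [/eqP -> | /Hs].
Qed.

Lemma cylinder1 b v : cylinder [:: b] v = [set w | X b w = v b].
Proof. by rewrite cylinder_cons cylinder_nil setIT. Qed.

Lemma measurable_cylinder s v : all (bp_good n) s -> measurable (cylinder s v).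
Proof.
elim: s => [|b s IH] /=; first by rewrite cylinder_nil.
move=> /andP [gb gs]; rewrite cylinder_cons.
by apply: measurableI; [exact: measurable_X|exact: IH].
Qed.

Lemma setI_cylinder s s' v v' : [predI s & s'] =1 pred0 ->
  cylinder s v `&` cylinder s' v' =
  cylinder (s ++ s') (fun b => if b \in s then v b else v' b).
Proof.
move=> dis; have nsb b : b \in s' -> b \in s = false.
  by move=> bs'; apply/negbTE/negP => bs; have := dis b; rewrite /= bs bs'.
apply/seteqP; split => w.
  move=> [Hs Hs'] b; rewrite /= mem_cat => /orP [bs|bs'].
    by rewrite bs; exact: Hs.
  by rewrite nsb //; exact: Hs'.
move=> H; split => b hb; have /= := H b; rewrite mem_cat hb ?orbT => /(_ isT) //.
by rewrite nsb.
Qed.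

Definition event_indep (D : set T) (S : pred bp_index) :=
  measurable D /\ forall s v, uniq s -> all (bp_good n) s -> all S s ->
    Pr P (D `&` cylinder s v) = Pr P D * Pr P (cylinder s v).

Lemma event_indep_setT S : event_indep setT S.
Proof. by split => // s v _ _ _; rewrite setTI Pr_setT mul1r. Qed.

Lemma event_indep_setI_cylinder D S s v :
  event_indep D S -> uniq s -> all (bp_good n) s -> all S s ->
  event_indep (D `&` cylinder s v) [pred b | S b & b \notin s] /\
  Pr P (D `&` cylinder s v) = Pr P D * Pr P (cylinder s v).
Proof.
move=> [mD hD] us gs Ss; split; last exact: hD.
split; first by apply: measurableI => //; exact: measurable_cylinder.
move=> s' v' us' gs' /allP Ss'.
have nsb b : b \in s' -> b \in s = false by move=> /Ss' /andP [_ /negbTE].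
have dis : [predI s & s'] =1 pred0.
  by move=> b /=; apply/negbTE/negP => /andP [bs /nsb]; rewrite bs.
have Ss2 : all S s' by apply/allP => b /Ss' /andP [].
have ucat : uniq (s ++ s').
  by rewrite cat_uniq us us' andbT; apply/hasPn => b /Ss' /andP [].
have gcat : all (bp_good n) (s ++ s') by rewrite all_cat gs gs'.
rewrite -setIA setI_cylinder // hD // ?all_cat ?Ss ?Ss2 //.
rewrite (hD s v) // -mulrA; congr (_ * _).
rewrite /cylinder !indep_X // big_cat /=; congr (_ * _).
  by rewrite big_seq [RHS]big_seq; apply: eq_bigr => b ->.
by rewrite big_seq [RHS]big_seq; apply: eq_bigr => b /nsb ->.
Qed.

(* Conditioning on the value [v] of a single variable [X b]. *)
Lemma cvg_series_Pr_setI_bigcup D S b (E : nat -> set T) (e : nat -> R) :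
  bp_good n b -> event_indep D S -> S b -> (forall v, measurable (E v)) ->
  (forall v D', event_indep D' [pred c | S c & c \notin [:: b]] ->
    Pr P (D' `&` E v) = Pr P D' * e v) ->
  series (fun v => Pr P D * (Pr P [set w | X b w = v] * e v)) @ \oo -->
    Pr P (D `&` \bigcup_v ([set w | X b w = v] `&` E v)).
Proof.
move=> gb iD Sb mE hE.
have mpiece v : measurable (D `&` ([set w | X b w = v] `&` E v)).
  by apply: measurableI; [exact: iD.1|apply: measurableI; [exact: measurable_X|exact: mE]].
have tr : trivIset setT (fun v => D `&` ([set w | X b w = v] `&` E v)).
  by move=> v v' _ _ [w [[_ [/= <- _]] [_ [/= <- _]]]].
rewrite setI_bigcupr; apply: cvg_trans _ (cvg_series_Pr_bigcup P _ mpiece tr).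
apply: near_eq_cvg; near=> N; apply: eq_bigr => v _.
have [] := @event_indep_setI_cylinder D S [:: b] (fun=> v) iD erefl.
- by rewrite /= gb.
- by rewrite /= Sb.
by rewrite cylinder1 => iDv PrDv; rewrite setIA hE // PrDv mulrA.
Unshelve. all: by end_near.
Qed.

Hypothesis law_xi : forall k j i m, (k <= n)%N -> (k < j)%N ->
  Pr P [set w | xi k j i w = m] = q j m.

(* [F j] is the probability that one individual of generation [j] has no
   descendants in generation [n]. *)
Local Notation F j := (fkn q j n 0).

Fixpoint descendants (k t j m : nat) (w : T) : nat :=
  if t is t'.+1 then descendants k t' j.+1 (\sum_(i < m) xi k j.+1 i w) w else m.

(* [a] individuals of generation [j.+1] of process [k], together with the children
   of the first [y] individuals of generation [j], have no descendants in generation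
   [j.+1 + t]. *)
Definition extinct_event k t j a y :=
  [set w | descendants k t j.+1 (a + \sum_(i < y) xi k j.+1 i w) w = 0%N].

Definition offspring_vars k j y : pred bp_index := fun b =>
  if b is inr (k', j', i) then (k' == k) && ((j.+1 < j')%N || (j' == j.+1) && (i < y)%N)
  else false.

Definition extinction_factorizes k t j y a :=
  measurable (extinct_event k t j a y) /\
  forall D S, event_indep D S -> (forall b, offspring_vars k j y b -> S b) ->
    Pr P (D `&` extinct_event k t j a y) = Pr P D * (F j.+1 ^+ a * F j ^+ y).

Lemma extinction_factorizesS k t j y : (j < n)%N -> (k <= j)%N ->
  (forall a, extinction_factorizes k t j y a) -> forall a, extinction_factorizes k t j y.+1 a.
Proof.
move=> jn kj IH a; pose b := inr (k, j.+1, y) : bp_index.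
have gb : bp_good n b by rewrite /= ltnS kj andbT (leq_trans kj) // ltnW.
have Ee : extinct_event k t j a y.+1 =
    \bigcup_v ([set w | X b w = v] `&` extinct_event k t j (a + v)%N y).
  apply/seteqP; split => w; rewrite /extinct_event /= big_ord_recr /=.
    by move=> h; exists (xi k j.+1 y w) => //; split => //=; rewrite addnAC -addnA.
  by move=> [v _ [/= <-]]; rewrite addnAC -addnA.
have mE v : measurable (extinct_event k t j (a + v)%N y) := (IH (a + v)%N).1.
split=> [|D S iD hS].
  by rewrite Ee; apply: bigcupT_measurable => v; apply: measurableI => //; exact: measurable_X.
have Sb : S b by apply: hS; rewrite /= !eqxx ltnSn orbT.
have hE v D' : event_indep D' [pred c | S c & c \notin [:: b]] ->
    Pr P (D' `&` extinct_event k t j (a + v)%N y) = Pr P D' * (F j.+1 ^+ (a + v) * F j ^+ y).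
  move=> iD'; have [_ fact] := IH (a + v)%N.
  apply: fact iD' _ => -[//|[[k' j'] i]] /= /andP [/eqP -> h].
  rewrite hS /=; last first.
    by case/orP: h => [->|/andP [-> hi]]; rewrite ?eqxx ?orbT ?ltnS ?(ltnW hi) ?orbT.
  by apply: contraTN h; rewrite mem_seq1 /b => /eqP [-> ->]; rewrite ltnn eqxx ltnn.
have := cvg_series_Pr_setI_bigcup _ _ _ _ _ gb iD Sb mE hE; rewrite -Ee => cvgE.
suff /cvg_seriesMl_lim -> : series (fun v => Pr P D * (F j.+1 ^+ a * F j ^+ y) *
    (q j.+1 v * F j.+1 ^+ v)) @ \oo --> Pr P (D `&` extinct_event k t j a y.+1).
  by rewrite [F j](fkn_pred _ _ _ _ jn) exprS /pgf; ring.
apply: cvg_trans _ cvgE; apply: near_eq_cvg; near=> N; apply: eq_bigr => v _.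
rewrite law_xi ?(leq_trans kj (ltnW jn)) // exprD; ring.
Unshelve. all: by end_near.
Qed.

Lemma extinction_factorizes_all k t j : (j.+1 + t = n)%N -> (k <= j)%N ->
  forall y a, extinction_factorizes k t j y a.
Proof.
elim: t j => [|t IH] j jtn kj; have jn : (j < n)%N by rewrite -jtn ltn_addr.
  elim=> [|y IHy]; last exact: extinction_factorizesS.
  move=> -[|a]; rewrite /extinction_factorizes /extinct_event /=.
    rewrite (_ : [set w | _] = setT); last by apply/seteqP; split => w //= _; rewrite big_ord0.
    by split=> [|D S _ _]; rewrite ?setIT ?expr0 ?mulr1.
  rewrite (_ : [set w | _] = set0); last by apply/seteqP; split => w //=; rewrite big_ord0.
  by split=> [|D S _ _]; rewrite ?setI0 ?Pr_set0 -?jtn ?addn0 ?fknn ?expr0n ?mul0r ?mulr0.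
elim=> [|y IHy]; last exact: extinction_factorizesS.
have jtn' : (j.+2 + t = n)%N by rewrite -jtn addSnnS.
move=> a; have [mE fact] := IH j.+1 jtn' (leq_trans kj (leqnSn j)) a 0%N.
rewrite /extinction_factorizes.
have -> : extinct_event k t.+1 j a 0 = extinct_event k t j.+1 0 a.
  by apply/seteqP; split => w; rewrite /extinct_event /= big_ord0 addn0 add0n.
split => // D S iD hS; rewrite (fact D S iD) ?expr0 ?mul1r ?mulr1 //.
move=> -[//|[[k' j'] i]] /= /andP [/eqP -> h]; apply: hS => /=.
by rewrite eqxx /=; case/orP: h => [/ltnW -> //|/andP [/eqP -> _]]; rewrite ltnSn.
Qed.

Lemma Zhat_diag k w : Zhat Y xi k k w = Y k w.
Proof. by case: k => //= k; rewrite ltnn eqxx. Qed.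

Lemma Zhat_descendants k t j w : (k <= j)%N ->
  Zhat Y xi k (j + t) w = descendants k t j (Zhat Y xi k j w) w.
Proof.
elim: t j => [|t IH] j kj; first by rewrite addn0.
rewrite -addSnnS IH ?(leq_trans kj) //= ltnNge (leq_trans kj) //=.
by rewrite ltn_eqF ?ltnS.
Qed.

Definition offspring_of k : pred bp_index := fun b =>
  if b is inr (k', j, _) then (k' == k) && (k < j)%N else false.

Definition extinction_factor k :=
  limn (series (fun i => Pr P [set w | Y k w = i] * F k ^+ i)).

Lemma Zhat_extinct_factorizes k : (k < n)%N ->
  measurable [set w | Zhat Y xi k n w = 0%N] /\
  forall D S, event_indep D S -> S (inl k) -> (forall b, offspring_of k b -> S b) ->
    Pr P (D `&` [set w | Zhat Y xi k n w = 0%N]) = Pr P D * extinction_factor k.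
Proof.
move=> kn; pose t := (n - k.+1)%N; have ktn : (k.+1 + t = n)%N by rewrite subnKC.
have Ee : [set w | Zhat Y xi k n w = 0%N] =
    \bigcup_i ([set w | X (inl k) w = i] `&` extinct_event k t k 0 i).
  apply/seteqP; split => w; rewrite /= -ktn addSnnS Zhat_descendants // Zhat_diag.
    by move=> h; exists (Y k w).
  by move=> [i _ [/= <-]].
have fact i := extinction_factorizes_all k t k ktn (leqnn k) i 0.
have mE i : measurable (extinct_event k t k 0 i) by have [] := fact i.
have gk : bp_good n (inl k) by rewrite /= ltnW.
split=> [|D S iD Sk hS].
  rewrite Ee; apply: bigcupT_measurable => i.
  by apply: measurableI; [exact: measurable_X|exact: mE].
rewrite Ee /extinction_factor; apply: cvg_seriesMl_lim.
apply: (cvg_series_Pr_setI_bigcup _ _ _ _ (fun i => F k ^+ i) gk iD Sk mE).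
move=> i D' iD'; have [_ fi] := fact i; rewrite (fi D' _ iD') ?expr0 ?mul1r //.
case=> [//|[[k' j'] i']] /= /andP [/eqP -> h]; rewrite hS //= eqxx.
by case/orP: h => [/ltnW -> //|/andP [/eqP -> _]]; rewrite ltnSn.
Qed.

Lemma Pr_Zhat_eq0 k : (k < n)%N ->
  Pr P [set w | Zhat Y xi k n w = 0%N] = extinction_factor k.
Proof.
move=> kn; have [_ fact] := Zhat_extinct_factorizes k kn.
rewrite -[X in Pr P X]setTI (fact setT predT) ?Pr_setT ?mul1r //.
exact: event_indep_setT.
Qed.

Definition process_ge m : pred bp_index := fun b =>
  if b is inr (k, _, _) then (m <= k)%N else if b is inl k then (m <= k)%N else false.

Definition extinct_first m := [set w | forall k, (k < m)%N -> Zhat Y xi k n w = 0%N].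

Lemma Pr_extinct_first m : (m <= n)%N ->
  event_indep (extinct_first m) (process_ge m) /\
  Pr P (extinct_first m) = \prod_(k < m) extinction_factor k.
Proof.
elim: m => [|m IH] mn.
  have -> : extinct_first 0 = setT by apply/seteqP; split => w // _ k.
  by split; [exact: event_indep_setT|rewrite Pr_setT big_ord0].
have [[mG iG] PrG] := IH (ltnW mn).
have [mZ fact] := Zhat_extinct_factorizes m mn.
have -> : extinct_first m.+1 = extinct_first m `&` [set w | Zhat Y xi m n w = 0%N].
  apply/seteqP; split => w /=.
    by move=> h; split=> [k km|]; apply: h; [exact: ltnW|exact: ltnSn].
  by move=> [h1 h2] k; rewrite ltnS leq_eqVlt => /orP [/eqP -> //|]; exact: h1.
have offspring_ge b : offspring_of m b -> process_ge m b.
  by case: b => // [[[k j] i]] /= /andP [/eqP -> _].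
have PrGZ := fact _ _ (conj mG iG) (leqnn m) offspring_ge.
split; last by rewrite PrGZ PrG big_ord_recr.
split=> [|s v us gs Ss]; first exact: measurableI.
have Ss' : all (process_ge m) s.
  by apply/allP => b /(allP Ss); case: b => [k|[[k j] i]] /= /ltnW.
have [iGs PrGs] := event_indep_setI_cylinder _ _ s v (conj mG iG) us gs Ss'.
have notin_s b : ~~ process_ge m.+1 b -> b \notin s by apply: contra => /(allP Ss).
rewrite setIAC (fact _ _ iGs) ?PrGs ?PrGZ; first by rewrite mulrAC.
  by rewrite /= leqnn notin_s //= ltnn.
move=> b ob; rewrite /= offspring_ge // notin_s //.
by case: b ob => // [[[k j] i]] /= /andP [/eqP -> _]; rewrite ltnn.
Qed.

Lemma Pr_sum_Zhat_eq0 :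
  Pr P [set w | (\sum_(k < n) Zhat Y xi k n w)%N = 0%N] =
  \prod_(k < n) Pr P [set w | Zhat Y xi k n w = 0%N].
Proof.
rewrite (eq_bigr _ (fun (k : 'I_n) _ => Pr_Zhat_eq0 k (ltn_ord k))).
rewrite -(Pr_extinct_first n (leqnn n)).2; congr (Pr P _); apply/seteqP.
split => w /=.
  by move/eqP; rewrite sum_nat_eq0 => /forallP h k kn; exact/eqP/(h (Ordinal kn)).
by move=> h; apply/eqP; rewrite sum_nat_eq0; apply/forallP => k; apply/eqP/h.
Qed.

Hypothesis prob_q : forall k, (1 <= k)%N -> is_prob_nat (q k).
Hypothesis pkn_gt0 : forall k, (k <= n)%N -> 0 < pkn q k n.
Context {z : nat}.
Hypothesis law_Y : forall k i, (k <= n)%N -> Pr P [set w | Y k w = i] = yhat_law q z n k i.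

Lemma extinction_factorS k : (0 < k < n)%N ->
  extinction_factor k = pkn q k n / pkn q k.-1 n * derive1 (fconv q z k) (F k).
Proof.
case: k => // k /= kn; have qk := prob_q k.+1 isT.
have F01 : 0 <= F k.+1 <= 1.
  apply: fkn_ge0_le1 => [j kj|]; last by rewrite lexx ler01.
  by apply: prob_q; exact: ltn_trans (ltn0Sn k) kj.
have F1 : F k.+1 < 1 by have := pkn_gt0 k.+1 (ltnW kn); rewrite /pkn subr_gt0.
have F0 : 0 <= F k.+1 by case/andP: F01.
have D : series (fun j => j%:R * (q k.+1 j * F k.+1 ^+ j.-1)) @ \oo -->
    derive1 (pgf (q k.+1)) (F k.+1).
  by under eq_fun do rewrite mulrA; apply: pgf_derive1; rewrite ?F0.
have tails := cvg_series_tails _ (fun j => mulr_ge0 (qk.1 j) (exprn_ge0 j.-1 F0)) (cvgP _ D).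
rewrite (cvg_lim _ D) // in tails.
rewrite /extinction_factor /fconv /=; apply: cvg_lim => //.
apply: cvg_trans _ (cvgMl_tmp (a := pkn q k.+1 n / pkn q k n) tails).
apply: near_eq_cvg; near=> N; rewrite /series /= mulr_sumr; apply: eq_bigr => i _.
by rewrite law_Y ?(ltnW kn) // /yhat_law /= -mulrA limn_series_tail_pgf.
Unshelve. all: by end_near.
Qed.

Lemma extinction_factor0 : (0 < n)%N ->
  extinction_factor 0 = pkn q 0 n / pm1n q z n * derive1 (fconv q z 0) (F 0).
Proof.
move=> n0; rewrite /fconv /= exp_derive1 /extinction_factor.
have law_ge i : (z <= i)%N -> Pr P [set w | Y 0 w = i] = 0.
  by move=> zi; rewrite law_Y // /yhat_law /= ltnNge zi.
have law_lt i : (0 <= i < z)%N ->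
    Pr P [set w | Y 0 w = i] * F 0 ^+ i = (1 - F 0) / pm1n q z n * F 0 ^+ z.-1.
  move=> /andP [_ iz]; rewrite law_Y // /yhat_law /= iz -[LHS]mulrA -exprD.
  by congr (_ * _ ^+ _); lia.
apply: cvg_lim => //; apply: cvg_near_cst; exists z => // N /= zN.
have tail0 : \sum_(z <= i < N) Pr P [set w | Y 0 w = i] * F 0 ^+ i = 0.
  by rewrite big_nat_cond big1 // => i /andP [/andP [zi _] _]; rewrite law_ge ?mul0r.
rewrite /series /= (big_cat_nat (leq0n z) zN) /= tail0 addr0 (eq_big_nat _ _ law_lt).
by rewrite sumr_const_nat subn0 -mulr_natr -[_ *: _]/(_ * _) /pkn; ring.
Qed.

Lemma prod_Pr_Zhat_eq0 : (0 < n)%N ->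
  \prod_(k < n) Pr P [set w | Zhat Y xi k n w = 0%N] =
  pkn q n.-1 n / pm1n q z n * \prod_(k < n) derive1 (fconv q z k) (F k).
Proof.
move=> n0.
pose ratio k := if k == 0%N then pkn q 0 n / pm1n q z n else pkn q k n / pkn q k.-1 n.
have factor (k : 'I_n) :
    Pr P [set w | Zhat Y xi k n w = 0%N] = ratio k * derive1 (fconv q z k) (F k).
  rewrite Pr_Zhat_eq0 // /ratio; case: eqP => [->|/eqP k0]; first exact: extinction_factor0.
  by rewrite extinction_factorS // lt0n k0 ltn_ord.
rewrite (eq_bigr _ (fun (k : 'I_n) _ => factor k)) big_split /=; congr (_ * _).
have pkn_neq0 k : (k < n.-1)%N -> pkn q k n != 0.
  by move=> kn; rewrite gt_eqF // pkn_gt0 // (leq_trans (ltnW kn)) // leq_pred.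
by rewrite /ratio (prod_ratio_telescope (fun k => pkn q k n)).

Qed.

End BranchingProcess.

Theorem lemma3p1 (R : realType) (q : nat -> nat -> R) (n z : nat)
  (d : measure_display) (T : measurableType d) (P : probability T R)
  (Y : nat -> T -> nat) (xi : nat -> nat -> nat -> T -> nat) :
  (forall k, (1 <= k)%N -> is_prob_nat (q k)) ->
  (1 <= n)%N -> (1 <= z)%N ->
  (forall k, (k <= n)%N -> 0 < pkn q k n) ->
  0 < pm1n q z n ->
  (forall a v, bp_good n a -> measurable [set w | bp_family Y xi a w = v]) ->
  mutually_indep P (bp_good n) (bp_family Y xi) ->
  (forall k i, (k <= n)%N -> Pr P [set w | Y k w = i] = yhat_law q z n k i) ->
  (forall k j i m, (k <= n)%N -> (k < j)%N -> Pr P [set w | xi k j i w = m] = q j m) ->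
  Pr P [set w | (\sum_(k < n) Zhat Y xi k n w)%N = 0%N]
    = \prod_(k < n) Pr P [set w | Zhat Y xi k n w = 0%N]
  /\ \prod_(k < n) Pr P [set w | Zhat Y xi k n w = 0%N]
    = pkn q n.-1 n / pm1n q z n *
      \prod_(k < n) derive1 (fconv q z k) (fkn q k n 0).
Proof.
move=> prob_q n_gt0 _ pkn_gt0 _ measurable_X indep_X law_Y law_xi; split.
  exact: Pr_sum_Zhat_eq0 measurable_X indep_X law_xi.
by rewrite (prod_Pr_Zhat_eq0 measurable_X indep_X law_xi prob_q pkn_gt0 law_Y n_gt0).
Qed.
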